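(* Let $N\ge 2$, let $s=(s_1,\dots,s_{N-1})\in\mathbb{C}^{N-1}$ be generic, and set $x_a=2s_a-2s_{a-1}$ for $1\le a\le N$, with $s_0=s_N=0$. Define $$F(s)=\mathbb{1}\otimes\mathbb{1}-\sum_{1\le a<b\le N}\frac{2}{x_a-x_b}\,E_{ab}\otimes E_{ba}\in \mathrm{End}(\mathbb{C}^N)^{\otimes 2},$$ and $R(s)=F_{21}(s)\,F_{12}(s)^{-1}$, where $F_{21}=PF_{12}P$ with $P$ the permutation of the two tensor factors. Then, writing $R(s)=\sum R_{i_1i_2}^{j_1j_2}E_{i_1j_1}\otimes E_{i_2j_2}$, the non-vanishing entries of $R(s)$ are, for $1\le a, b\le N$ with $a\neq b$ in the last two lines, $$R_{aa}^{aa}=1,\qquad R_{ab}^{ab}=\begin{cases}1 & b>a,\\ 1-\dfrac{4}{(x_a-x_b)^2} & b<a,\end{cases}\qquad R_{ab}^{ba}=\frac{2}{x_a-x_b},$$ and $R(s)$ satisfies the dynamical Yang--Baxter equation $$R_{12}(s+h^{(3)})\,R_{13}(s)\,R_{23}(s+h^{(1)})=R_{23}(s)\,R_{13}(s+h^{(2)})\,R_{12}(s)$$ in $\mathrm{End}(\mathbb{C}^N)^{\otimes 3}$.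
   Context: $E_{ab}$ denotes the $N\times N$ elementary matrix with entry $1$ in position $(a,b)$ and $0$ elsewhere; $R_{12},R_{13},R_{23}$ denote $R$ acting on the indicated factors of $(\mathbb{C}^N)^{\otimes 3}$. The shift notation: let $h_j=E_{jj}-E_{j+1,j+1}$ ($1\le j\le N-1$) be the Cartan generators of $sl_N$ in the fundamental representation, $(d_{ij})$ the inverse of the Cartan matrix of $sl_N$, and $h^\vee_i=\sum_j d_{ij}h_j$. Then $R_{12}(s+h^{(3)})$ means the operator obtained by replacing each $s_i$ in $R_{12}(s)$ by $s_i+h^\vee_i$ acting in the third tensor factor (these are diagonal, so this is well defined: on $v_{i_1}\otimes v_{i_2}\otimes v_c$ one substitutes the eigenvalue of $h^\vee_i$ on $v_c$); similarly for $h^{(1)}$, $h^{(2)}$. *)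

From HB Require Import structures.
From mathcomp Require Import all_boot all_order all_algebra.
From mathcomp Require Import reals complex.
Set Implicit Arguments. Unset Strict Implicit. Unset Printing Implicit Defensive.
Import Order.TTheory GRing.Theory Num.Theory.
Local Open Scope ring_scope.

Section DYBE.
Variable C : fieldType.
Variable N : nat.

(* Operators on (C^N)^{(x)2} and (C^N)^{(x)3}: the basis vector
   v_{i1} (x) v_{i2} is indexed by mxvec_index i1 i2, and
   v_{i1} (x) v_{i2} (x) v_{i3} by mxvec_index (mxvec_index i1 i2) i3. *)
Definition Op2 := 'M[C]_(N * N).
Definition Op3 := 'M[C]_(N * N * N).

Definition dec (m n : nat) (k : 'I_(m * n)) : 'I_m * 'I_n :=
  enum_val (cast_ord (esym (mxvec_cast m n)) k).

Definition dec3 (k : 'I_(N * N * N)) : 'I_N * 'I_N * 'I_N :=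
  let p := dec k in (dec p.1, p.2).

Definition mk2 (f : 'I_N -> 'I_N -> 'I_N -> 'I_N -> C) : Op2 :=
  \matrix_(I, J) f (dec I).1 (dec I).2 (dec J).1 (dec J).2.

Definition mk3 (f : 'I_N -> 'I_N -> 'I_N -> 'I_N -> 'I_N -> 'I_N -> C) : Op3 :=
  \matrix_(I, J) f (dec3 I).1.1 (dec3 I).1.2 (dec3 I).2
                   (dec3 J).1.1 (dec3 J).1.2 (dec3 J).2.

(* entry R_{i1 i2}^{j1 j2}: coefficient of E_{i1 j1} (x) E_{i2 j2} *)
Definition ent2 (A : Op2) (i1 i2 j1 j2 : 'I_N) : C :=
  A (mxvec_index i1 i2) (mxvec_index j1 j2).

Definition tens (A B : 'M[C]_N) : Op2 :=
  mk2 (fun i1 i2 j1 j2 => A i1 j1 * B i2 j2).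

Definition E (a b : 'I_N) : 'M[C]_N := delta_mx a b.

Definition Pflip : Op2 :=
  mk2 (fun i1 i2 j1 j2 => ((i1 == j2) && (i2 == j1))%:R).

(* s = (s_1,...,s_{N-1}) is s : 'I_(N.-1) -> C, s_k = s (k-1);
   sext s k = s_k for 1 <= k <= N-1 and s_0 = s_N = 0. *)
Definition sext (s : 'I_(N.-1) -> C) (k : nat) : C :=
  if k is k'.+1 then (if insub k' is Some i then s i else 0) else 0.

(* x_a = 2 s_a - 2 s_{a-1}, for a : 'I_N standing for the 1-based a+1 *)
Definition xcoord (s : 'I_(N.-1) -> C) (a : 'I_N) : C :=
  2 * sext s a.+1 - 2 * sext s a.

Definition Fmat (s : 'I_(N.-1) -> C) : Op2 :=
  1%:M - \sum_(a < N) \sum_(b < N | (a < b)%N)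
           (2 / (xcoord s a - xcoord s b)) *: tens (E a b) (E b a).

Definition F21 (s : 'I_(N.-1) -> C) : Op2 := Pflip *m Fmat s *m Pflip.

Definition Rmat (s : 'I_(N.-1) -> C) : Op2 := F21 s *m invmx (Fmat s).

Definition cartan : 'M[C]_(N.-1) :=
  \matrix_(i, j) (if i == j then 2
                  else if (i.+1 == j :> nat) || (j.+1 == i :> nat) then -1
                  else 0).

Definition dinv : 'M[C]_(N.-1) := invmx cartan.

(* eigenvalue of h_j = E_{jj} - E_{j+1,j+1} (1-based j) on v_c *)
Definition hval (j : 'I_(N.-1)) (c : 'I_N) : C :=
  (c == j :> nat)%:R - (c == j.+1 :> nat)%:R.

Definition hvee (i : 'I_(N.-1)) (c : 'I_N) : C :=
  \sum_(j < N.-1) dinv i j * hval j c.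

(* s + h^vee evaluated on v_c *)
Definition shift (s : 'I_(N.-1) -> C) (c : 'I_N) : 'I_(N.-1) -> C :=
  fun i => s i + hvee i c.

Definition R12 (s : 'I_(N.-1) -> C) : Op3 :=
  mk3 (fun i1 i2 i3 j1 j2 j3 => ent2 (Rmat s) i1 i2 j1 j2 * (i3 == j3)%:R).
Definition R13 (s : 'I_(N.-1) -> C) : Op3 :=
  mk3 (fun i1 i2 i3 j1 j2 j3 => ent2 (Rmat s) i1 i3 j1 j3 * (i2 == j2)%:R).
Definition R23 (s : 'I_(N.-1) -> C) : Op3 :=
  mk3 (fun i1 i2 i3 j1 j2 j3 => ent2 (Rmat s) i2 i3 j2 j3 * (i1 == j1)%:R).

Definition R12_h3 (s : 'I_(N.-1) -> C) : Op3 :=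
  mk3 (fun i1 i2 i3 j1 j2 j3 =>
         ent2 (Rmat (shift s i3)) i1 i2 j1 j2 * (i3 == j3)%:R).
Definition R13_h2 (s : 'I_(N.-1) -> C) : Op3 :=
  mk3 (fun i1 i2 i3 j1 j2 j3 =>
         ent2 (Rmat (shift s i2)) i1 i3 j1 j3 * (i2 == j2)%:R).
Definition R23_h1 (s : 'I_(N.-1) -> C) : Op3 :=
  mk3 (fun i1 i2 i3 j1 j2 j3 =>
         ent2 (Rmat (shift s i1)) i2 i3 j2 j3 * (i1 == j1)%:R).

Definition xdistinct (s : 'I_(N.-1) -> C) : Prop :=
  forall a b : 'I_N, a != b -> xcoord s a != xcoord s b.

(* genericity used in the theorem: R(s) and all shifted R(s + h^{(c)})
   that occur are defined *)
Definition generic (s : 'I_(N.-1) -> C) : Prop :=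
  xdistinct s /\ forall c : 'I_N, xdistinct (shift s c).

End DYBE.

(* F(s) = 1 - U, where U = sum_{a<b} 2/(x_a - x_b) E_ab (x) E_ba squares to zero,
   so F^-1 = 1 + U and R = F_21 (1 + U) can be computed entrywise; every
   operator involved maps v_a (x) v_b into the span of v_a (x) v_b and
   v_b (x) v_a.  Using the explicit inverse of the Cartan matrix, the shift by
   h^vee evaluated on v_c changes x_a - x_b by 2 (a == c) - 2 (b == c).  Hence
   both sides of the dynamical Yang-Baxter equation act on coordinates by
   permuting the three indices with coefficients rational in the x_a, and the
   equation reduces to one rational identity for each relative order of the
   three indices; genericity makes all denominators x_a - x_b and
   x_a - x_b +- 2 nonzero. *)

From HB Require Import structures.
From mathcomp Require Import all_boot all_order all_algebra.
From mathcomp Require Import reals complex.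
From mathcomp Require Import ring zify.
Import Order.TTheory GRing.Theory Num.Theory.
Local Open Scope ring_scope.

Set Implicit Arguments. Unset Strict Implicit. Unset Printing Implicit Defensive.

Ltac decide_nat := repeat match goal with
  | |- context [(?a == ?b :> nat)] =>
      first [ have -> : (a == b :> nat) = true by lia
            | have -> : (a == b :> nat) = false by lia ]
  | |- context [(?a <= ?b)%N] =>
      first [ have -> : (a <= b)%N = true by lia
            | have -> : (a <= b)%N = false by lia ]
  end.

Section TensorCoordinates.
Variable C : fieldType.

Lemma dec_mxvec_index m n (i : 'I_m) (j : 'I_n) : dec (mxvec_index i j) = (i, j).
Proof. by rewrite /dec /mxvec_index cast_ordK enum_rankK. Qed.

Lemma sum_mxvec_index m n (f : 'I_(m * n) -> C) :
  \sum_K f K = \sum_i \sum_j f (mxvec_index i j).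
Proof.
rewrite pair_big /= (reindex (uncurry (@mxvec_index m n))) /=.
  by apply: eq_bigr => -[i j].
exact: curry_mxvec_bij.
Qed.

Lemma eq_mxvec_index m n (i1 j1 : 'I_m) (i2 j2 : 'I_n) :
  (mxvec_index i1 i2 == mxvec_index j1 j2) = (i1 == j1) && (i2 == j2).
Proof.
have decK : cancel (uncurry (@mxvec_index m n)) (@dec m n).
  by move=> [i j]; rewrite /= dec_mxvec_index.
exact: (can_eq decK (i1, i2) (j1, j2)).
Qed.

Lemma sum_point (n : nat) (a : 'I_n) (g : 'I_n -> C) :
  \sum_k (k == a)%:R * g k = g a.
Proof.
rewrite (bigD1 a) //= eqxx mul1r big1 ?addr0 // => k /negbTE ->.
by rewrite mul0r.
Qed.

Variable N : nat.

Lemma ent2_mk2 (f : 'I_N -> 'I_N -> 'I_N -> 'I_N -> C) i1 i2 j1 j2 :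
  ent2 (mk2 f) i1 i2 j1 j2 = f i1 i2 j1 j2.
Proof. by rewrite /ent2 /mk2 mxE !dec_mxvec_index. Qed.

Lemma ent2_mulmx (A B : Op2 C N) i1 i2 j1 j2 :
  ent2 (A *m B) i1 i2 j1 j2 =
  \sum_k1 \sum_k2 ent2 A i1 i2 k1 k2 * ent2 B k1 k2 j1 j2.
Proof. by rewrite /ent2 mxE sum_mxvec_index. Qed.

Lemma ent2_1 i1 i2 j1 j2 :
  ent2 (1%:M : Op2 C N) i1 i2 j1 j2 = ((i1 == j1) && (i2 == j2))%:R.
Proof. by rewrite /ent2 mxE eq_mxvec_index. Qed.

Lemma op2_ext (A B : Op2 C N) :
  (forall i1 i2 j1 j2, ent2 A i1 i2 j1 j2 = ent2 B i1 i2 j1 j2) -> A = B.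
Proof.
move=> eqAB; apply/matrixP => I J.
by case/mxvec_indexP: I => i1 i2; case/mxvec_indexP: J => j1 j2; apply: eqAB.
Qed.

Lemma sum_point2 (a1 a2 : 'I_N) (g : 'I_N -> 'I_N -> C) :
  \sum_k1 \sum_k2 ((k1 == a1) && (k2 == a2))%:R * g k1 k2 = g a1 a2.
Proof.
under eq_bigr do under eq_bigr do rewrite -mulnb natrM -mulrA.
by under eq_bigr do rewrite -mulr_sumr sum_point; rewrite sum_point.
Qed.

End TensorCoordinates.

Section SwapOperators.
Variables (C : fieldType) (N : nat).
Implicit Types d w : 'I_N -> 'I_N -> C.

(* Operators preserving each plane spanned by v_a (x) v_b and v_b (x) v_a, with
   diagonal coefficient d and exchange coefficient w; P, F, F^-1 and R are all
   of this form. *)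
Definition swapop d w : Op2 C N :=
  mk2 (fun i1 i2 j1 j2 => d i1 i2 * ((j1 == i1) && (j2 == i2))%:R
                          + w i1 i2 * ((j1 == i2) && (j2 == i1))%:R).

Lemma ent2_swapop d w i1 i2 j1 j2 :
  ent2 (swapop d w) i1 i2 j1 j2 =
  d i1 i2 * ((j1 == i1) && (j2 == i2))%:R + w i1 i2 * ((j1 == i2) && (j2 == i1))%:R.
Proof. exact: ent2_mk2. Qed.

Lemma eq_swapop d w d' w' : d =2 d' -> w =2 w' -> swapop d w = swapop d' w'.
Proof. by move=> eq_d eq_w; apply: op2_ext => *; rewrite !ent2_swapop eq_d eq_w. Qed.

Lemma mulmx_swapop d w d' w' :
  swapop d w *m swapop d' w' =
  swapop (fun i1 i2 => d i1 i2 * d' i1 i2 + w i1 i2 * w' i2 i1)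
         (fun i1 i2 => d i1 i2 * w' i1 i2 + w i1 i2 * d' i2 i1).
Proof.
apply: op2_ext => i1 i2 j1 j2; rewrite ent2_mulmx.
under eq_bigr do under eq_bigr do rewrite ent2_swapop mulrDl -!mulrA.
under eq_bigr do rewrite big_split /= -!mulr_sumr.
rewrite big_split /= -!mulr_sumr !sum_point2 !ent2_swapop; ring.
Qed.

Lemma swapop1 : swapop (fun _ _ => 1) (fun _ _ => 0) = 1%:M.
Proof.
apply: op2_ext => i1 i2 j1 j2.
by rewrite ent2_swapop ent2_1 mul1r mul0r addr0 (eq_sym j1) (eq_sym j2).
Qed.

Lemma Pflip_swapop : Pflip C N = swapop (fun _ _ => 0) (fun _ _ => 1).
Proof.
apply: op2_ext => i1 i2 j1 j2.
by rewrite ent2_mk2 ent2_swapop mul0r add0r mul1r andbC !(eq_sym j1) !(eq_sym j2).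
Qed.

End SwapOperators.

Section RMatrix.
Variables (C : fieldType) (N : nat).
Implicit Types (s : 'I_(N.-1) -> C) (a b : 'I_N).

Definition rswap s a b : C := 2 / (xcoord s a - xcoord s b).

Definition rdiag s a b : C :=
  if (a < b)%N then 1 else 1 - 4 / (xcoord s a - xcoord s b) ^+ 2.

Definition fcoef s a b : C := if (a < b)%N then rswap s a b else 0.

Lemma rswap_antisym s a b : rswap s b a = - rswap s a b.
Proof. by rewrite /rswap -opprB invrN mulrN. Qed.

Lemma rswapxx s a : rswap s a a = 0.
Proof. by rewrite /rswap subrr invr0 mulr0. Qed.

Lemma rdiagxx s a : rdiag s a a = 1.
Proof. by rewrite /rdiag ltnn subrr expr0n /= invr0 mulr0 subr0. Qed.

Lemma Fmat_swapop s : Fmat s = swapop (fun _ _ => 1) (fun a b => - fcoef s a b).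
Proof.
apply: op2_ext => i1 i2 j1 j2; rewrite ent2_swapop mul1r {1}/ent2 !mxE eq_mxvec_index.
rewrite (eq_sym j1) (eq_sym j2) mulNr; congr (_ - _).
rewrite summxE; under eq_bigr do rewrite summxE big_mkcond /=.
transitivity (\sum_a \sum_b ((a == i1) && (b == i2))%:R *
    (if (a < b)%N then rswap s a b * ((j1 == b) && (j2 == a))%:R else 0)).
  apply: eq_bigr => a _; apply: eq_bigr => b _.
  case: ifP => _; last by rewrite mulr0.
  rewrite !mxE !dec_mxvec_index /= -!mulnb !natrM /rswap.
  by rewrite (eq_sym a) (eq_sym b) (eq_sym j1) (eq_sym j2); ring.
by rewrite sum_point2 /fcoef; case: ifP => _; rewrite ?mul0r.
Qed.

Lemma F21_swapop s : F21 s = swapop (fun _ _ => 1) (fun a b => - fcoef s b a).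
Proof.
rewrite /F21 Fmat_swapop Pflip_swapop !mulmx_swapop.
by apply: eq_swapop => a b /=; ring.
Qed.

Lemma fcoefM_eq0 s a b : fcoef s a b * fcoef s b a = 0.
Proof. by rewrite /fcoef; case: ltngtP; rewrite ?mulr0 ?mul0r. Qed.

Lemma invmx_Fmat s : invmx (Fmat s) = swapop (fun _ _ => 1) (fcoef s).
Proof.
have FK : Fmat s *m swapop (fun _ _ => 1) (fcoef s) = 1%:M.
  rewrite Fmat_swapop mulmx_swapop -swapop1.
  by apply: eq_swapop => a b /=; rewrite ?mulNr ?fcoefM_eq0; ring.
have [Funit _] := mulmx1_unit FK.
by rewrite -[invmx _]mulmx1 -FK mulKmx.
Qed.

Lemma Rmat_swapop s : Rmat s = swapop (rdiag s) (rswap s).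
Proof.
rewrite /Rmat invmx_Fmat F21_swapop mulmx_swapop.
apply: eq_swapop => a b /=; rewrite /fcoef /rdiag; case: (ltngtP a b) => [_|_|/val_inj->].
- by ring.
- by rewrite rswap_antisym /rswap -exprVn; ring.
- by rewrite subrr expr0n /= invr0; ring.
- by ring.
- by rewrite rswap_antisym; ring.
- by rewrite rswapxx; ring.
Qed.

Lemma ent2_Rmat s i1 i2 j1 j2 :
  ent2 (Rmat s) i1 i2 j1 j2 =
  rdiag s i1 i2 * ((j1 == i1) && (j2 == i2))%:R
  + rswap s i1 i2 * ((j1 == i2) && (j2 == i1))%:R.
Proof. by rewrite Rmat_swapop ent2_swapop. Qed.

End RMatrix.

Section Coweights.
Variables (C : fieldType) (N : nat).
Hypothesis N_neq0 : N%:R != 0 :> C.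
Implicit Types (s w : 'I_(N.-1) -> C) (a b c : 'I_N).

Lemma sextD s w k : sext (fun i => s i + w i) k = sext s k + sext w k.
Proof. by case: k => [|k] /=; [rewrite addr0 | case: insub => [i|]; rewrite ?addr0]. Qed.

Lemma xcoordD s w a : xcoord (fun i => s i + w i) a = xcoord s a + xcoord w a.
Proof. by rewrite /xcoord !sextD; ring. Qed.

Lemma sum_sext w m : \sum_(i < N.-1) (i.+1 == m)%:R * w i = sext w m.
Proof.
case: m => [|m]; first by rewrite big1 // => i _; rewrite mul0r.
rewrite /sext; case: insubP => [k _ <- | out_m].
  by under eq_bigr do rewrite eqSS val_eqE; rewrite sum_point.
by rewrite big1 // => i _; have lt_i := ltn_ord i; rewrite eqSS; decide_nat; rewrite mul0r.
Qed.

Lemma cartanE (k i : 'I_(N.-1)) :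
  cartan C N k i = 2 * (i.+1 == k.+1)%:R - (i.+1 == k)%:R - (i.+1 == k.+2)%:R.
Proof.
rewrite mxE -val_eqE /= !eqSS.
have [e1|e1] := eqVneq (i : nat) k; have [e2|e2] := eqVneq i.+1 k;
  have [e3|e3] := eqVneq (k : nat).+1 i; decide_nat; rewrite /=; first [ring | lia].
Qed.

Lemma cartan_mul_sext w k :
  \sum_i cartan C N k i * w i = 2 * sext w k.+1 - sext w k - sext w k.+2.
Proof.
under eq_bigr do rewrite cartanE !mulrBl -mulrA.
by rewrite !sumrB -mulr_sumr !sum_sext.
Qed.

(* The inverse Cartan matrix is d_ij = min(i, j) - ij/N (1-based indices); as a
   function of the row index m it vanishes at m = 0 and m = N. *)
Definition cartan_inv_entry (j m : nat) : C :=
  (minn m j.+1)%:R - (m * j.+1)%:R / N%:R.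

Lemma sext_boundary (g : nat -> C) m :
  g 0%N = 0 -> g N = 0 -> (m <= N)%N -> sext (fun i : 'I_(N.-1) => g i.+1) m = g m.
Proof.
move=> g0 gN; case: m => [|m] le_mN //=.
by case: insubP => [i _ -> | out_m] //; rewrite (_ : m.+1 = N) //; lia.
Qed.

Lemma minn_second_difference k m :
  2 * (minn k.+1 m)%:R - (minn k m)%:R - (minn k.+2 m)%:R = (k.+1 == m)%:R :> C.
Proof.
have nat_id : (minn k m + minn k.+2 m + (k.+1 == m) = 2 * minn k.+1 m)%N.
  by case: eqP => /= ?; lia.
by rewrite -natrM -nat_id !natrD; ring.
Qed.

Lemma cartan_mulmx_inv :
  cartan C N *m \matrix_(i, j) cartan_inv_entry j i.+1 = 1%:M.
Proof.
apply/matrixP => k j; rewrite [RHS]mxE [LHS]mxE.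
under eq_bigr do rewrite [X in _ * X]mxE.
rewrite (cartan_mul_sext (fun i => cartan_inv_entry j i.+1)).
have g0 : cartan_inv_entry j 0 = 0 by rewrite /cartan_inv_entry min0n mul0n mul0r subrr.
have gN : cartan_inv_entry j N = 0.
  rewrite /cartan_inv_entry natrM mulrAC divff // mul1r.
  by rewrite (minn_idPr _) ?subrr //; have := ltn_ord j; lia.
have lt_k := ltn_ord k.
rewrite !sext_boundary //; try lia.
rewrite /cartan_inv_entry -val_eqE /= -eqSS -minn_second_difference !natrM -!natr1.
by field.
Qed.

Lemma cartan_unit : cartan C N \in unitmx.
Proof. by case: (mulmx1_unit cartan_mulmx_inv). Qed.

Lemma cartan_mul_hvee (k : 'I_(N.-1)) c :
  \sum_i cartan C N k i * hvee C i c = hval C k c.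
Proof.
transitivity (\sum_j (cartan C N *m dinv C N) k j * hval C j c).
  under eq_bigr do rewrite /hvee mulr_sumr.
  rewrite exchange_big /=; apply: eq_bigr => j _.
  by rewrite mxE mulr_suml; apply: eq_bigr => i _; rewrite mulrA.
by rewrite /dinv mulmxV ?cartan_unit //; under eq_bigr do rewrite mxE eq_sym; rewrite sum_point.
Qed.

(* In fact x_a(h^vee(v_c)) = 2 (a == c) - 2/N; the constant cancels here. *)
Lemma xcoord_hvee_sub c a b :
  xcoord (fun i => hvee C i c) a - xcoord (fun i => hvee C i c) b =
  2 * (a == c :> nat)%:R - 2 * (b == c :> nat)%:R.
Proof.
rewrite /xcoord; set t := sext _.
have jump m : (m.+1 < N)%N ->
    2 * t m.+1 - t m - t m.+2 = (c == m :> nat)%:R - (c == m.+1 :> nat)%:R.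
  move=> lt_m; have lt_m' : (m < N.-1)%N by lia.
  by have := cartan_mul_hvee (Ordinal lt_m') c; rewrite cartan_mul_sext.
pose d m := 2 * t m.+1 - 2 * t m - 2 * (c == m :> nat)%:R.
have d_const m : (m < N)%N -> d m = d 0%N.
  elim: m => [//|m IH] lt_m; rewrite -IH /d; last by lia.
  have -> : t m.+2 = 2 * t m.+1 - t m - ((c == m :> nat)%:R - (c == m.+1 :> nat)%:R).
    by rewrite -jump //; ring.
  ring.
transitivity (d a - d b + 2 * (c == a :> nat)%:R - 2 * (c == b :> nat)%:R).
  by rewrite /d; ring.
by rewrite !d_const // subrr add0r (eq_sym (c : nat)) (eq_sym (c : nat)).
Qed.

Lemma xcoord_shift_sub s c a b :
  xcoord (shift s c) a - xcoord (shift s c) b =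
  xcoord s a - xcoord s b + 2 * (a == c :> nat)%:R - 2 * (b == c :> nat)%:R.
Proof.
rewrite /shift !xcoordD.
by rewrite -[RHS]addrA -xcoord_hvee_sub; ring.
Qed.

End Coweights.

Section ThreeTensor.
Variables (C : fieldType) (N : nat).
Implicit Types (t : 'I_N -> 'I_(N.-1) -> C) (g : 'I_N -> 'I_N -> 'I_N -> C).

Definition tcoord (v : 'cV[C]_(N * N * N)) (i1 i2 i3 : 'I_N) : C :=
  v (mxvec_index (mxvec_index i1 i2) i3) 0.

Lemma tcoord_mk3_mulmx f v i1 i2 i3 :
  tcoord (mk3 f *m v) i1 i2 i3 =
  \sum_k1 \sum_k2 \sum_k3 f i1 i2 i3 k1 k2 k3 * tcoord v k1 k2 k3.
Proof.
rewrite /tcoord mxE !sum_mxvec_index.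
apply: eq_bigr => k1 _; apply: eq_bigr => k2 _; apply: eq_bigr => k3 _.
by rewrite mxE /dec3 !dec_mxvec_index.
Qed.

Lemma tcoord_inj (v v' : 'cV[C]_(N * N * N)) :
  (forall i1 i2 i3, tcoord v i1 i2 i3 = tcoord v' i1 i2 i3) -> v = v'.
Proof.
move=> eq_vv'; apply/matrixP => I j; rewrite [j]ord1.
by case/mxvec_indexP: I => I i3; case/mxvec_indexP: I => i1 i2; apply: eq_vv'.
Qed.

Lemma sum_point3D (p q : C) (a1 a2 a3 b1 b2 b3 : 'I_N) g :
  \sum_k1 \sum_k2 \sum_k3
     (p * ((k1 == a1) && (k2 == a2) && (k3 == a3))%:R
      + q * ((k1 == b1) && (k2 == b2) && (k3 == b3))%:R) * g k1 k2 k3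
  = p * g a1 a2 a3 + q * g b1 b2 b3.
Proof.
have point c1 c2 c3 : \sum_k1 \sum_k2 \sum_k3
    ((k1 == c1) && (k2 == c2) && (k3 == c3))%:R * g k1 k2 k3 = g c1 c2 c3.
  under eq_bigr do under eq_bigr do under eq_bigr do rewrite -mulnb natrM -mulrA.
  by under eq_bigr do under eq_bigr do rewrite -mulr_sumr sum_point; rewrite sum_point2.
under eq_bigr do under eq_bigr do under eq_bigr do rewrite mulrDl -!mulrA.
under eq_bigr do under eq_bigr do rewrite big_split /= -!mulr_sumr.
under eq_bigr do rewrite big_split /= -!mulr_sumr.
by rewrite big_split /= -!mulr_sumr !point.
Qed.

Definition R12t t : Op3 C N :=
  mk3 (fun i1 i2 i3 j1 j2 j3 => ent2 (Rmat (t i3)) i1 i2 j1 j2 * (i3 == j3)%:R).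
Definition R13t t : Op3 C N :=
  mk3 (fun i1 i2 i3 j1 j2 j3 => ent2 (Rmat (t i2)) i1 i3 j1 j3 * (i2 == j2)%:R).
Definition R23t t : Op3 C N :=
  mk3 (fun i1 i2 i3 j1 j2 j3 => ent2 (Rmat (t i1)) i2 i3 j2 j3 * (i1 == j1)%:R).

(* Coordinates of R_pq(t(i_r)) v in terms of those of v, r being the third
   (spectator) index: t = shift s gives the dynamical shifts, t = fun=> s the
   plain operators. *)
Definition act12 t g i1 i2 i3 : C :=
  rdiag (t i3) i1 i2 * g i1 i2 i3 + rswap (t i3) i1 i2 * g i2 i1 i3.
Definition act13 t g i1 i2 i3 : C :=
  rdiag (t i2) i1 i3 * g i1 i2 i3 + rswap (t i2) i1 i3 * g i3 i2 i1.
Definition act23 t g i1 i2 i3 : C :=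
  rdiag (t i1) i2 i3 * g i1 i2 i3 + rswap (t i1) i2 i3 * g i1 i3 i2.

Lemma tcoord_R12t t v i1 i2 i3 :
  tcoord (R12t t *m v) i1 i2 i3 = act12 t (tcoord v) i1 i2 i3.
Proof.
rewrite tcoord_mk3_mulmx /act12 -sum_point3D.
do 3![apply: eq_bigr => ? _]; rewrite ent2_Rmat -!mulnb !natrM (eq_sym i3); ring.
Qed.

Lemma tcoord_R13t t v i1 i2 i3 :
  tcoord (R13t t *m v) i1 i2 i3 = act13 t (tcoord v) i1 i2 i3.
Proof.
rewrite tcoord_mk3_mulmx /act13 -sum_point3D.
do 3![apply: eq_bigr => ? _]; rewrite ent2_Rmat -!mulnb !natrM (eq_sym i2); ring.
Qed.

Lemma tcoord_R23t t v i1 i2 i3 :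
  tcoord (R23t t *m v) i1 i2 i3 = act23 t (tcoord v) i1 i2 i3.
Proof.
rewrite tcoord_mk3_mulmx /act23 -sum_point3D.
do 3![apply: eq_bigr => ? _]; rewrite ent2_Rmat -!mulnb !natrM (eq_sym i1); ring.
Qed.

Lemma op3_ext (A B : Op3 C N) :
  (forall v i1 i2 i3, tcoord (A *m v) i1 i2 i3 = tcoord (B *m v) i1 i2 i3) -> A = B.
Proof.
move=> eqAB; apply/matrixP => i j.
have := tcoord_inj (eqAB (delta_mx j 0)); rewrite -!colE.
by move/(congr1 (fun M : 'cV[C]_(N * N * N) => M i 0)); rewrite !mxE.
Qed.

End ThreeTensor.

Section DynamicalYangBaxter.
Variables (C : fieldType) (N : nat) (s : 'I_(N.-1) -> C).
Hypotheses (N_neq0 : N%:R != 0 :> C) (s_generic : generic s).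
Implicit Types (a b : 'I_N).

Lemma xcoord_sub_neq0 a b : a != b -> xcoord s a - xcoord s b != 0.
Proof. by move=> neq_ab; rewrite subr_eq0; apply: s_generic.1. Qed.

Lemma xcoord_sub_add2_neq0 a b : a != b -> xcoord s a - xcoord s b + 2 != 0.
Proof.
move=> neq_ab; have := s_generic.2 a a b neq_ab.
have ba : (b == a :> nat) = false by apply/negbTE; rewrite val_eqE eq_sym.
by rewrite -subr_eq0 xcoord_shift_sub // eqxx ba mulr1 mulr0 subr0.
Qed.

Lemma xcoord_sub_sub2_neq0 a b : a != b -> xcoord s a - xcoord s b - 2 != 0.
Proof.
move=> neq_ab; have := s_generic.2 b a b neq_ab.
have ab : (a == b :> nat) = false by apply/negbTE; rewrite val_eqE.
by rewrite -subr_eq0 xcoord_shift_sub // eqxx ab mulr1 mulr0 addr0.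
Qed.

Lemma dybe_act g i1 i2 i3 :
  act12 (shift s) (act13 (fun=> s) (act23 (shift s) g)) i1 i2 i3 =
  act23 (fun=> s) (act13 (shift s) (act12 (fun=> s) g)) i1 i2 i3.
Proof.
rewrite /act12 /act13 /act23.
(* One case per weak order of i1, i2, i3, each a rational identity in the x_a. *)
case: (ltngtP i1 i2) => [lt12|lt21|/val_inj e12]; [| | subst i2];
  case: (ltngtP i1 i3) => [lt13|lt31|/val_inj e13]; try subst i3;
  try (case: (ltngtP i2 i3) => [lt23|lt32|/val_inj e23]; try subst i3);
  try (exfalso; lia).
all: rewrite ?rdiagxx ?rswapxx /rdiag /rswap ?xcoord_shift_sub //.
all: decide_nat; rewrite /= ?mulr0 ?mulr1 ?addr0 ?subr0.
all: field; repeat (apply/andP; split).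
all: first [ apply: xcoord_sub_neq0 | apply: xcoord_sub_add2_neq0
           | apply: xcoord_sub_sub2_neq0 ].
all: by rewrite -val_eqE /=; lia.
Qed.

Lemma dybe : R12_h3 s *m R13 s *m R23_h1 s = R23 s *m R13_h2 s *m R12 s.
Proof.
apply: op3_ext => v i1 i2 i3; rewrite -!mulmxA.
rewrite tcoord_R12t tcoord_R23t /act12 /act23 !tcoord_R13t /act13.
rewrite !tcoord_R12t !tcoord_R23t.
exact: dybe_act.
Qed.

End DynamicalYangBaxter.

Local Open Scope complex_scope.

Theorem mainTheorem1 (R : realType) (N : nat) (hN : (2 <= N)%N)
    (s : 'I_(N.-1) -> R[i]) (hs : generic s) :
  let x := xcoord s in
  let Rs := Rmat s in
  (forall i1 i2 j1 j2 : 'I_N,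
      ~~ (((i1 == j1) && (i2 == j2)) || ((i1 == j2) && (i2 == j1))) ->
      ent2 Rs i1 i2 j1 j2 = 0) /\
  (forall a : 'I_N, ent2 Rs a a a a = 1) /\
  (forall a b : 'I_N, a != b ->
      ent2 Rs a b a b =
        (if (a < b)%N then 1 else 1 - 4 / (x a - x b) ^+ 2)) /\
  (forall a b : 'I_N, a != b -> ent2 Rs a b b a = 2 / (x a - x b)) /\
  R12_h3 s *m R13 s *m R23_h1 s = R23 s *m R13_h2 s *m R12 s.
Proof.
move=> x Rs.
have N_neq0 : N%:R != 0 :> R[i] by rewrite pnatr_eq0 -lt0n (leq_trans _ hN).
split; [|split; [|split; [|split]]].
- move=> i1 i2 j1 j2 /norP[/negbTE ne_id /negbTE ne_swap].
  by rewrite ent2_Rmat !(eq_sym j1) !(eq_sym j2) ne_id andbC ne_swap mulr0 mulr0 addr0.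
- by move=> a; rewrite ent2_Rmat rdiagxx rswapxx eqxx mulr1 mul0r addr0.
- move=> a b ne_ab; rewrite ent2_Rmat !eqxx (negbTE ne_ab) /=.
  by rewrite mulr1 mulr0 addr0.
- move=> a b ne_ab; rewrite ent2_Rmat !eqxx eq_sym (negbTE ne_ab) /=.
  by rewrite mulr1 mulr0 add0r.
- exact: dybe.
Qed.
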